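(* Let $X$ be a complex Banach space and let $T\in\mathcal{B}(X)$ be a power-bounded operator such that $\sigma(T)\cap\mathbb{T}=\{1\}$. Let $m:(0,\pi]\to(0,\infty)$ be defined by $m(\theta)=\sup\{\|R(\mathrm{e}^{\mathrm{i}\vartheta},T)\|:\theta\leq|\vartheta|\leq\pi\}$. Suppose that $$\lim_{\theta\to0}\max\big\{\|\theta R(\mathrm{e}^{\mathrm{i}\theta},T)\|,\|\theta R(\mathrm{e}^{-\mathrm{i}\theta},T)\|\big\}=\infty.$$ Then, given any right-inverse $m^{-1}$ of $m$ (defined on the range of $m$), there exist constants $c,C>0$ such that $\|T^n(I-T)\|\geq c\, m^{-1}(Cn)$ for all sufficiently large $n\geq0$.
   Context: $T$ is power-bounded if $\sup_{n\geq0}\|T^n\|<\infty$; $\mathbb{T}$ is the unit circle; $R(\lambda,T)=(\lambda-T)^{-1}$. The function $m$ is continuous and decreasing; a right-inverse $m^{-1}$ is a function on the range of $m$ with $m(m^{-1}(s))=s$. *)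

From HB Require Import structures.
From mathcomp Require Import all_boot all_order all_algebra.
From mathcomp Require Import all_classical all_reals all_analysis.
From mathcomp Require Import complex.
Import Order.TTheory GRing.Theory Num.Theory.
Import numFieldNormedType.Exports.
Local Open Scope classical_set_scope.
Local Open Scope ring_scope.

(* The norm `|x| of x : X lives in R[i] (it is real and nonnegative);
   nrm x is its real part, i.e. the norm as a real number. *)
Definition nrm {R : realType} {X : normedModType R[i]} (x : X) : R :=
  complex.Re `|x|.

Definition bounded_op {R : realType} {X : normedModType R[i]} (f : X -> X) : Prop :=
  linear f /\ exists M : R, forall x, nrm (f x) <= M * nrm x.

Definition opnorm {R : realType} {X : normedModType R[i]} (f : X -> X) : R :=
  sup [set nrm (f x) | x in [set x : X | nrm x <= 1]].

Definition is_resolvent {R : realType} {X : normedModType R[i]}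
  (T : X -> X) (l : R[i]) (S : X -> X) : Prop :=
  bounded_op S /\ (forall x, S (l *: x - T x) = x) /\
  (forall x, l *: S x - T (S x) = x).

Definition spectrum {R : realType} {X : normedModType R[i]} (T : X -> X) : set R[i] :=
  [set l | ~ exists S, is_resolvent T l S].

(* the resolvent R(lambda, T) (a chosen inverse; it is unique when it exists) *)
Definition resolvent {R : realType} {X : normedModType R[i]} (T : X -> X) (l : R[i])
  : X -> X := get [set S | is_resolvent T l S].

Definition expi {R : realType} (t : R) : R[i] := (cos t +i* sin t)%C.

Definition mres {R : realType} {X : normedModType R[i]} (T : X -> X) (th : R) : R :=
  sup [set opnorm (resolvent T (expi v)) | v in [set v : R | th <= `|v| <= pi]].

Definition power_bounded {R : realType} {X : normedModType R[i]} (T : X -> X) : Prop :=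
  exists M : R, forall n : nat, opnorm (iter n T) <= M.

From HB Require Import structures.
From mathcomp Require Import all_boot all_order all_algebra.
From mathcomp Require Import all_classical all_reals all_analysis.
From mathcomp Require Import complex.
From mathcomp Require Import ring lra.
Import Order.TTheory GRing.Theory Num.Theory.
Import numFieldNormedType.Exports.
Local Open Scope classical_set_scope.
Local Open Scope ring_scope.

(** Write [M] for a bound of the powers of [T].  If [|l| = 1], then iterating
    [l R(l,T) = I + T R(l,T)] gives [|R(l,T) x| <= k M |x| + |T^k R(l,T) x|],
    while applying [T^n (I - T)] to [R(l,T) x] controls [|T^n R(l,T) x|]; so
    [|R(l,T)| <= 2 M (n + |1 - l|^-1)] as soon as [2 |T^n (I - T)| <= |1 - l|].
    As [|1 - e^{iv}|] grows with [|v|] on [[-pi, pi]] and is at least [|v| / pi],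
    this gives [m(t) <= 2 M (n + |1 - e^{it}|^-1)] unless
    [|1 - e^{it}| <= 2 |T^n (I - T)|].
    By the resolvent identity [m] is continuous on [(0, pi]], and the blow-up
    hypothesis makes it unbounded near [0], so for large [n] the value [C n],
    [C = 4 M + 1], is taken by [m] at [t = m^-1(C n)].  For this [t] the bound on
    [m(t)] is impossible: for small [t] because [t m(t) > 4 M pi] by the blow-up,
    for the other [t] because [n] is large.  Hence
    [|T^n (I - T)| >= |1 - e^{it}| / 2 >= t / (2 pi)]. *)

Section ComplexModulus.
Context {R : realType}.
Implicit Types z : R[i].

Definition cabs z : R := complex.Re `|z|.

Lemma normr_cabs z : `|z| = (cabs z)%:C%C.
Proof. by rewrite /cabs RRe_real // ger0_real. Qed.

Lemma cabs_ge0 z : 0 <= cabs z.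
Proof. by rewrite -(@ler0c R) -normr_cabs. Qed.

Lemma cabs_eq0 z : cabs z = 0 -> z = 0.
Proof. by move=> h; apply/normr0_eq0; rewrite normr_cabs h. Qed.

Lemma cabsE z : cabs z = Num.sqrt (complex.Re z ^+ 2 + complex.Im z ^+ 2).
Proof. by rewrite /cabs normc_def. Qed.

Lemma cabs_real (r : R) : cabs r%:C%C = `|r|.
Proof. by rewrite cabsE /= expr0n /= addr0 sqrtr_sqr. Qed.

Lemma cabs_le_ReIm z : cabs z <= `|complex.Re z| + `|complex.Im z|.
Proof.
rewrite cabsE; set a := complex.Re z; set b := complex.Im z.
rewrite -[leRHS]ger0_norm ?addr_ge0 // -sqrtr_sqr; apply: ler_wsqrtr.
rewrite sqrrD !real_normK ?num_real // mulr2n.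
by have := normr_ge0 a; have := normr_ge0 b; nra.
Qed.

End ComplexModulus.

Section RealNorm.
Context {R : realType} {V : normedModType R[i]}.
Implicit Types (x y : V) (a : R[i]).

Lemma normr_nrm x : `|x| = (nrm x)%:C%C.
Proof. by rewrite /nrm RRe_real // ger0_real. Qed.

Lemma nrm_ge0 x : 0 <= nrm x.
Proof. by rewrite -(@ler0c R) -normr_nrm. Qed.

Lemma ler_nrmD x y : nrm (x + y) <= nrm x + nrm y.
Proof. by rewrite -(@lecR R) rmorphD /= -!normr_nrm ler_normD. Qed.

Lemma nrmZ a x : nrm (a *: x) = cabs a * nrm x.
Proof.
by apply: (@complexI R); rewrite rmorphM /= -normr_nrm -normr_cabs -normr_nrm normrZ.
Qed.

Lemma nrmN x : nrm (- x) = nrm x.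
Proof. by rewrite /nrm normrN. Qed.

Lemma nrm0 : nrm (0 : V) = 0.
Proof. by rewrite /nrm normr0. Qed.

Lemma nrm_eq0 x : nrm x = 0 -> x = 0.
Proof. by move=> h; apply/normr0_eq0; rewrite normr_nrm h. Qed.

End RealNorm.

Section LinearMap.
Context {R : realType} {V : normedModType R[i]}.
Context {f : V -> V} (lf : linear f).
Implicit Types (x y : V) (a : R[i]).

Lemma lin0 : f 0 = 0.
Proof.
have h := lf 1 0 0; rewrite scaler0 addr0 scale1r in h.
by apply: (addIr (f 0)); rewrite add0r -h.
Qed.

Lemma linZ a x : f (a *: x) = a *: f x.
Proof. by have := lf a x 0; rewrite !addr0 lin0 addr0. Qed.

Lemma linD x y : f (x + y) = f x + f y.
Proof. by have := lf 1 x y; rewrite !scale1r. Qed.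

Lemma linB x y : f (x - y) = f x - f y.
Proof. by rewrite linD -scaleN1r linZ scaleN1r. Qed.

Lemma linear_iter n : linear (iter n f).
Proof. by elim: n => [|n IH] a u v //=; rewrite IH lf. Qed.

End LinearMap.

Section OperatorNorm.
Context {R : realType} {V : normedModType R[i]}.
Implicit Types (f : V -> V) (x : V).

Definition op_bounded f := exists M : R, forall x, nrm (f x) <= M * nrm x.

Lemma op_bounded_has_ubound f : op_bounded f ->
  has_ubound [set nrm (f x) | x in [set x : V | nrm x <= 1]].
Proof.
move=> [M hM]; exists (Num.max M 0) => _ [x hx <-].
apply: (le_trans (hM x)); apply: (le_trans (y := Num.max M 0 * nrm x)).
  by apply: ler_wpM2r; [exact: nrm_ge0 | rewrite le_max lexx].
by rewrite -[leRHS]mulr1; apply: ler_wpM2l => //; rewrite le_max lexx orbT.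
Qed.

Lemma opnorm_le f K : 0 <= K -> (forall x, nrm (f x) <= K * nrm x) -> opnorm f <= K.
Proof.
move=> K0 hK; apply: ge_sup.
  by exists (nrm (f 0)); exists 0 => //=; rewrite nrm0 ler01.
move=> _ [x hx <-]; apply: (le_trans (hK x)).
by rewrite -[leRHS]mulr1; apply: ler_wpM2l.
Qed.

Lemma opnorm_ge0 f : linear f -> op_bounded f -> 0 <= opnorm f.
Proof.
move=> lf bf; apply: (le_trans (y := nrm (f 0))); first by rewrite lin0 // nrm0.
by apply: ub_le_sup; [exact: op_bounded_has_ubound | exists 0 => //=; rewrite nrm0 ler01].
Qed.

Lemma nrm_le_opnorm f x : linear f -> op_bounded f -> nrm (f x) <= opnorm f * nrm x.
Proof.
move=> lf bf; have [/nrm_eq0 ->|nx] := eqVneq (nrm x) 0.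
  by rewrite lin0 // !nrm0 mulr0.
have x0 : 0 < nrm x by rewrite lt_neqAle eq_sym nx nrm_ge0.
set y := ((nrm x)^-1)%:C%C *: x.
have ny : nrm y = 1 by rewrite /y nrmZ cabs_real ger0_norm ?invr_ge0 ?nrm_ge0 // mulVf.
have : nrm (f y) <= opnorm f.
  by apply: ub_le_sup; [exact: op_bounded_has_ubound | exists y => //=; rewrite ny].
rewrite /y linZ // nrmZ cabs_real ger0_norm ?invr_ge0 ?nrm_ge0 //.
by rewrite ler_pdivrMl // mulrC.
Qed.

End OperatorNorm.

Section Resolvent.
Context {R : realType} {V : normedModType R[i]}.
Context {T : V -> V} (lT : linear T).
Implicit Types (S : V -> V) (x y : V) (l m : R[i]).

Lemma resolvent_linear {l S} : is_resolvent T l S -> linear S.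
Proof. by case=> [[]]. Qed.

Lemma resolvent_op_bounded {l S} : is_resolvent T l S -> op_bounded S.
Proof. by case=> [[]]. Qed.

Lemma resolvent_identity {l S0 m S} y : is_resolvent T l S0 -> is_resolvent T m S ->
  S0 y - S y = (m - l) *: S0 (S y).
Proof.
move=> h0 [_ [_ hS]]; have lS0 := resolvent_linear h0; case: h0 => _ [hS0 _].
have -> : S0 y - S y = S0 (m *: S y - T (S y)) - S0 (l *: S y - T (S y)).
  by rewrite hS hS0.
rewrite -(linB lS0) -(linZ lS0); congr (S0 _).
by rewrite opprB addrA subrK scalerBl.
Qed.

Lemma opnorm_resolventB {l S0 m S K} :
  is_resolvent T l S0 -> is_resolvent T m S -> 0 < K ->
  (forall y, nrm (S0 y) <= K * nrm y) -> 2 * K * cabs (m - l) <= 1 ->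
  `|opnorm S0 - opnorm S| <= 2 * K ^+ 2 * cabs (m - l).
Proof.
move=> h0 h K0 hK cK; set c := cabs (m - l) in cK *.
have c0 : 0 <= c := cabs_ge0 _.
have hI y := resolvent_identity y h0 h.
have hS y : nrm (S y) <= 2 * K * nrm y.
  have : nrm (S y) <= K * nrm y + c * (K * nrm (S y)).
    have E : S y = S0 y - (m - l) *: S0 (S y) by rewrite -hI opprB addrC subrK.
    rewrite {1}E; apply: (le_trans (ler_nrmD _ _)); rewrite nrmN nrmZ; apply: lerD => //.
    by rewrite -/c ler_wpM2l.
  by have := nrm_ge0 (S y); have := nrm_ge0 y; nra.
have hdiff y : nrm (S0 y - S y) <= 2 * K ^+ 2 * c * nrm y.
  rewrite hI nrmZ -/c (_ : 2 * K ^+ 2 * c * nrm y = c * (K * (2 * K * nrm y))); last by ring.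
  apply: ler_wpM2l => //; apply: (le_trans (hK _)).
  by apply: ler_wpM2l; [exact: ltW | exact: hS].
have [lS lS0] := (resolvent_linear h, resolvent_linear h0).
have [bS bS0] := (resolvent_op_bounded h, resolvent_op_bounded h0).
have dc0 : 0 <= 2 * K ^+ 2 * c by rewrite !mulr_ge0 // ltW.
have le_S0 : opnorm S0 <= opnorm S + 2 * K ^+ 2 * c.
  apply: opnorm_le => [|y]; first by rewrite addr_ge0 // opnorm_ge0.
  rewrite -[S0 y](subrK (S y)) addrC mulrDl.
  by apply: (le_trans (ler_nrmD _ _)); apply: lerD => //; exact: nrm_le_opnorm.
have le_S : opnorm S <= opnorm S0 + 2 * K ^+ 2 * c.
  apply: opnorm_le => [|y]; first by rewrite addr_ge0 // opnorm_ge0.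
  rewrite -[S y](subrK (S0 y)) addrC -opprB mulrDl.
  apply: (le_trans (ler_nrmD _ _)); rewrite nrmN.
  by apply: lerD => //; exact: nrm_le_opnorm.
by rewrite ler_norml; apply/andP; split; lra.
Qed.

Context {M : R} (MT : forall k x, nrm (iter k T x) <= M * nrm x).

Lemma nrm_resolvent_le_iter {l S} x k : is_resolvent T l S -> cabs l = 1 ->
  nrm (S x) <= k%:R * M * nrm x + nrm (iter k T (S x)).
Proof.
move=> [_ [_ hS]] l1; elim: k => [|k IH] /=; first by rewrite !mul0r add0r.
apply: (le_trans IH); rewrite mulrSr mulrDl mulrDl mul1r -addrA lerD2l.
(* [l T^k S x = T^k x + T^(k+1) S x] and [|l| = 1] *)
have -> : nrm (iter k T (S x)) = nrm (iter k T x + T (iter k T (S x))).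
  rewrite -[LHS]mul1r -l1 -nrmZ -linZ; last exact: linear_iter.
  rewrite -iterS iterSr -linD; last exact: linear_iter.
  by congr (nrm (iter k T _)); rewrite -[X in X + _](hS x) subrK.
by apply: (le_trans (ler_nrmD _ _)); rewrite lerD2r.
Qed.

Lemma resolvent_bound l S n e x : is_resolvent T l S -> cabs l = 1 ->
  0 < cabs (1 - l) -> 2 * e <= cabs (1 - l) ->
  (forall x, nrm (iter n T (x - T x)) <= e * nrm x) ->
  nrm (S x) <= 2 * M * (n%:R + (cabs (1 - l))^-1) * nrm x.
Proof.
move=> hRS l1 d0 de he; have hS := hRS.2.2.
have hiter := nrm_resolvent_le_iter x n hRS l1.
have split_iter : iter n T (S x - T (S x)) = (1 - l) *: iter n T (S x) + iter n T x.
  have -> : S x - T (S x) = (1 - l) *: S x + (l *: S x - T (S x)).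
    by rewrite scalerBl scale1r addrA subrK.
  by rewrite hS (linD (linear_iter lT n)) (linZ (linear_iter lT n)).
have hb : cabs (1 - l) * nrm (iter n T (S x)) <= e * nrm (S x) + M * nrm x.
  rewrite -nrmZ -[X in nrm X](addrK (iter n T x)) -split_iter.
  by apply: (le_trans (ler_nrmD _ _)); rewrite nrmN; apply: lerD.
set d := cabs (1 - l) in d0 de hb *.
set a := nrm (S x) in hiter hb *; set b := nrm (iter n T (S x)) in hiter hb.
set u := nrm x in hiter hb *.
have [a0 u0] : 0 <= a /\ 0 <= u by split; exact: nrm_ge0.
have ea : e * a <= d / 2 * a by apply: ler_wpM2r => //; lra.
have h1 : d * a <= d * (n%:R * M * u) + d * b by rewrite -mulrDr ler_wpM2l // ltW.
have H : d * a <= 2 * M * (n%:R * d + 1) * u by nra.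
rewrite -(ler_pM2l d0); apply: (le_trans H); rewrite le_eqVlt; apply/orP; left.
by apply/eqP; field; rewrite gt_eqF.
Qed.

End Resolvent.

Section UnitCircle.
Context {R : realType}.
Implicit Types t v : R.

Lemma ler_cos_pi {t v} : 0 <= t -> t <= v -> v <= pi -> cos v <= cos t.
Proof.
move=> t0 tv vpi; have [->//|ltv] := eqVneq t v.
have ht : t \in `[0, pi] by rewrite in_itv /= t0 (le_trans tv vpi).
have hv : v \in `[0, pi] by rewrite in_itv /= vpi (le_trans t0 tv).
by apply: ltW; rewrite (ltr_cos ht hv) lt_neqAle ltv.
Qed.

Lemma cabs_expi v : cabs (expi v) = 1.
Proof. by rewrite cabsE /= cos2Dsin2 sqrtr1. Qed.

Lemma cabs_1Bexpi v : cabs (1 - expi v) = Num.sqrt (2 - 2 * cos v).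
Proof.
rewrite cabsE /=; congr Num.sqrt.
by have := cos2Dsin2 v; rewrite !expr2 => h; nra.
Qed.

Lemma onemcos_ge_dyadic k t : pi / 2 ^+ k.+1 <= t <= pi ->
  t ^+ 2 / (2 * pi ^+ 2) <= 1 - cos t.
Proof.
have pi0 : 0 < pi :> R := pi_gt0 R.
have p20 : 0 < 2 * pi ^+ 2 :> R by rewrite mulr_gt0 // exprn_gt0.
elim: k t => [|k IH] t /andP[lo hi].
  have t0 : 0 <= t by apply: le_trans lo; rewrite expr1 divr_ge0 // ltW.
  have c0 : cos t <= 0.
    by rewrite -(@cos_pihalf R); apply: ler_cos_pi => //; rewrite divr_ge0 // ltW.
  by rewrite ler_pdivrMr //; nra.
have pk : 2 <= 2 ^+ k.+1 :> R.
  by rewrite exprS -[leLHS]mulr1 ler_pM2l // exprn_ege1 // ler1n.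
have pk0 : 0 < 2 ^+ k.+1 :> R by rewrite exprn_gt0.
have [h|h] := leP (pi / 2 ^+ k.+1) t; first by apply: IH; rewrite h hi.
have t0 : 0 <= t by apply: le_trans lo; rewrite divr_ge0 // ?ltW // exprn_gt0.
(* The bound at [2 t] yields the one at [t] since
   [1 - cos (2 t) = 2 (1 - cos t) (1 + cos t) <= 4 (1 - cos t)]. *)
have : (t *+ 2) ^+ 2 / (2 * pi ^+ 2) <= 1 - (cos t ^+ 2 *+ 2 - 1).
  rewrite -cos_mulr2n; apply: IH; apply/andP; split.
    move: lo; rewrite exprS ler_pdivrMr ?mulr_gt0 // => lo.
    by rewrite ler_pdivrMr // mulr2n; nra.
  by move: h; rewrite ltr_pdivlMr // mulr2n => h; nra.
have c1 := cos_le1 t.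
by rewrite !ler_pdivrMr // mulr2n => H; nra.
Qed.

Lemma onemcos_ge t : 0 <= t <= pi -> t ^+ 2 / (2 * pi ^+ 2) <= 1 - cos t.
Proof.
move=> /andP[t0 tp]; have pi0 : 0 < pi :> R := pi_gt0 R.
have [->|tn0] := eqVneq t 0; first by rewrite expr0n /= mul0r cos0 subrr.
have tpos : 0 < t by rewrite lt_neqAle eq_sym tn0.
have [n hn] : exists n, pi / t < n%:R.
  by exists (Num.bound (pi / t)); apply: archi_boundP; rewrite divr_ge0 // ltW.
apply: (@onemcos_ge_dyadic n); rewrite tp andbT ler_pdivrMr ?exprn_gt0 //.
move: hn; rewrite ltr_pdivrMr // => hn; apply: ltW; apply: (lt_le_trans hn).
rewrite [leRHS]mulrC ler_pM2r // -natrX ler_nat.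
apply: ltnW; apply: (ltn_trans (ltn_expl n (isT : (1 < 2)%N))).
by rewrite ltn_exp2l.
Qed.

Lemma cabs_1Bexpi_ge t : 0 <= t <= pi -> t / pi <= cabs (1 - expi t).
Proof.
move=> tpi; have pi0 : 0 < pi :> R := pi_gt0 R.
have q0 : 0 <= t / pi by case/andP: tpi => t0 _; rewrite divr_ge0 // ltW.
have h : t ^+ 2 <= (1 - cos t) * (2 * pi ^+ 2).
  by rewrite -ler_pdivrMr ?mulr_gt0 ?exprn_gt0 //; exact: onemcos_ge.
rewrite cabs_1Bexpi -(ger0_norm q0) -sqrtr_sqr; apply: ler_wsqrtr.
by rewrite expr_div_n ler_pdivrMr ?exprn_gt0 //; nra.
Qed.

Lemma cabs_1Bexpi_le {t v} : 0 <= t -> t <= `|v| -> `|v| <= pi ->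
  cabs (1 - expi t) <= cabs (1 - expi v).
Proof.
move=> t0 tv vp; rewrite !cabs_1Bexpi; apply: ler_wsqrtr.
by rewrite -(cos_norm v); have := ler_cos_pi t0 tv vp; lra.
Qed.

Lemma cabs_1Bexpi_gt0 v : 0 < `|v| <= pi -> 0 < cabs (1 - expi v).
Proof.
move=> /andP[v0 vp]; have v0p : 0 <= `|v| <= pi by rewrite normr_ge0.
apply: lt_le_trans (cabs_1Bexpi_le (normr_ge0 v) (lexx _) vp).
by apply: lt_le_trans (cabs_1Bexpi_ge _ v0p); rewrite divr_gt0 ?pi_gt0.
Qed.

Lemma expi_neq1 v : 0 < `|v| <= pi -> expi v != 1.
Proof.
move=> /cabs_1Bexpi_gt0; apply: contraTneq => ->.
by rewrite subrr /cabs normr0 ltxx.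
Qed.

Lemma cabs_expiB_near v0 e : 0 < e -> \forall v \near v0, cabs (expi v - expi v0) < e.
Proof.
move=> e0; have e20 : 0 < e / 2 by rewrite divr_gt0.
have /cvgrPdistC_lt /(_ _ e20) hc := @continuous_cos R v0.
have /cvgrPdistC_lt /(_ _ e20) hs := @continuous_sin R v0.
apply: filterS2 hc hs => v hcv hsv; apply: le_lt_trans (cabs_le_ReIm _) _ => /=.
lra.
Qed.

End UnitCircle.

Section ResolventNorm.
Context {R : realType} {V : normedModType R[i]}.
Variable T : V -> V.

Definition resnorm (v : R) := opnorm (resolvent T (expi v)).

Definition resnorm_sym (v : R) := Num.max (resnorm v) (resnorm (- v)).

End ResolventNorm.

Section ResolventOnCircle.
Context {R : realType} {V : normedModType R[i]}.
Context {T : V -> V} (Hsp : forall z : R[i], `|z| = 1 -> (spectrum T z <-> z = 1)).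

Lemma is_resolvent_resolvent {z} : cabs z = 1 -> z != 1 -> is_resolvent T z (resolvent T z).
Proof.
move=> z1 zn1; apply: getPex; apply: contrapT => hn.
have : spectrum T z by [].
by move/(Hsp z); rewrite normr_cabs z1 => /(_ erefl) /eqP; rewrite (negbTE zn1).
Qed.

Lemma continuous_resnorm v0 : expi v0 != 1 -> {for v0, continuous (resnorm T)}.
Proof.
move=> n1; set l0 := expi v0.
have hS0 : is_resolvent T l0 (resolvent T l0).
  by apply: is_resolvent_resolvent; rewrite ?cabs_expi.
have [K K0 hK] : exists2 K, 0 < K & forall y, nrm (resolvent T l0 y) <= K * nrm y.
  have [M0 hM0] := resolvent_op_bounded hS0.
  exists (Num.max M0 0 + 1) => [|y]; first by rewrite ltr_pwDr // le_max lexx orbT.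
  apply: (le_trans (hM0 y)); apply: ler_wpM2r; first exact: nrm_ge0.
  by apply: (@le_trans _ _ (Num.max M0 0)); rewrite ?le_max ?lexx ?lerDl.
have d00 : 0 < cabs (1 - l0).
  rewrite lt_neqAle cabs_ge0 andbT eq_sym; apply/eqP => /cabs_eq0 /eqP.
  by rewrite subr_eq0 eq_sym (negbTE n1).
apply/cvgrPdist_lt => e e0.
set rho := Num.min (Num.min (1 / (2 * K)) (cabs (1 - l0))) (e / (4 * K ^+ 2)).
have rho0 : 0 < rho by rewrite !lt_min d00 !divr_gt0 ?mulr_gt0 ?exprn_gt0.
apply: (filterS _ (cabs_expiB_near _ _ rho0)) => v.
rewrite /rho !lt_min => /andP[/andP[cK cd] ce].
have n1v : expi v != 1 by apply: contraTneq cd => ->; rewrite ltxx.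
have hS := is_resolvent_resolvent (cabs_expi v) n1v.
rewrite /resnorm; apply: le_lt_trans (opnorm_resolventB hS0 hS K0 hK _) _.
  by move: cK; rewrite ltr_pdivlMr ?mulr_gt0 // mulrC => /ltW.
by move: ce; rewrite ltr_pdivlMr ?mulr_gt0 ?exprn_gt0 // mulrC; lra.
Qed.

Lemma continuous_resnorm_sym v : 0 < `|v| <= pi -> {for v, continuous (resnorm_sym T)}.
Proof.
move=> vpi; apply: continuous_max; first exact/continuous_resnorm/expi_neq1.
apply: (continuous_comp (f := -%R)); first exact: oppr_continuous.
by apply/continuous_resnorm/expi_neq1; rewrite normrN.
Qed.

Lemma resnorm_sym_argmax t : 0 < t <= pi ->
  exists c, [/\ t <= c <= pi,
    (forall v, t <= v <= pi -> resnorm_sym T v <= resnorm_sym T c) &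
    mres T t = resnorm_sym T c].
Proof.
move=> /andP[t0 tp].
have wc : {within `[t, pi], continuous (resnorm_sym T)}.
  apply: continuous_in_subspaceT => x; rewrite inE /= in_itv /= => /andP[tx xp].
  by apply: continuous_resnorm_sym; rewrite gtr0_norm ?xp // (lt_le_trans t0 tx).
have [c] := EVT_max tp wc; rewrite in_itv /= => /andP[tc cp] hc.
have c0 : 0 <= c by apply: le_trans tc; exact: ltW.
have hcv v : t <= v <= pi -> resnorm_sym T v <= resnorm_sym T c.
  by move=> hv; apply: hc; rewrite in_itv.
exists c; split => //; first by rewrite tc cp.
rewrite /mres; set S := [set _ | _ in _].
have ubS : ubound S (resnorm_sym T c).
  move=> _ [v /andP[tv vp] <-]; apply: le_trans (hcv `|v| _); last by rewrite tv vp.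
  rewrite /resnorm_sym; have [v0|v0] := ltP v 0.
    by rewrite ltr0_norm // opprK le_max lexx orbT.
  by rewrite ger0_norm // le_max lexx.
apply/eqP; rewrite eq_le; apply/andP; split.
  by apply: ge_sup => //; exists (resnorm T c), c => //=; rewrite ger0_norm // tc cp.
apply: ub_le_sup; first by exists (resnorm_sym T c).
rewrite /resnorm_sym; case: leP => _; [exists (- c) | exists c] => //=;
  by rewrite ?normrN ger0_norm // tc cp.
Qed.

Lemma resnorm_sym_le_mres t : 0 < t <= pi -> resnorm_sym T t <= mres T t.
Proof.
move=> tpi; have [c [/andP[tc cp] hc ->]] := resnorm_sym_argmax _ tpi.
by apply: hc; rewrite lexx; case/andP: tpi.
Qed.

End ResolventOnCircle.

Lemma dist_min_le {R : realDomainType} (a b p : R) :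
  `|Num.min a p - Num.min b p| <= `|a - b|.
Proof.
have h1 := ler_norm (a - b); have h2 : b - a <= `|a - b| by rewrite distrC ler_norm.
by case: (leP a p) => ap; case: (leP b p) => bp; rewrite ler_norml; apply/andP; split; lra.
Qed.

Section TailMax.
Context {R : realType}.
Variables (g F : R -> R).
Context {b : R} (b_gt0 : 0 < b).
Hypothesis g_cont : forall u, 0 < u <= b -> {for u, continuous g}.
Hypothesis F_argmax : forall u, 0 < u <= b -> exists c, [/\ u <= c <= b,
  (forall v, u <= v <= b -> g v <= g c) & F u = g c].

Lemma continuous_tail_max t : 0 < t -> {for t, continuous (fun s => F (Num.min s b))}.
Proof.
move=> t0; apply/cvgrPdist_lt => e e0; set u := Num.min t b.
have u0 : 0 < u by rewrite lt_min t0 b_gt0.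
have ub : u <= b by rewrite ge_min lexx orbT.
have uI : 0 < u <= b by rewrite u0 ub.
have e20 : 0 < e / 2 by rewrite divr_gt0.
have /cvgrPdist_lt /(_ _ e20) /nbhs_normP [d1 /= d10 near_u] := g_cont _ uI.
have [c [/andP[uc cb] gc Fu]] := F_argmax _ uI.
apply/nbhs_normP; exists (Num.min d1 (u / 2)) => /= [|y ty].
  by rewrite lt_min d10 divr_gt0.
set u' := Num.min y b.
have : `|u - u'| < Num.min d1 (u / 2) by apply: le_lt_trans (dist_min_le _ _ _) ty.
rewrite lt_min => /andP[uu'1 uu'2].
have u'0 : 0 < u' by move: uu'2; rewrite ltr_norml => /andP[_ ?]; lra.
have u'b : u' <= b by rewrite ge_min lexx orbT.
have [c' [/andP[u'c' c'b] gc' Fu']] := F_argmax _ (introT andP (conj u'0 u'b)).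
have near_between w : Num.min u u' <= w <= Num.max u u' -> `|g u - g w| < e / 2.
  move=> /andP[]; rewrite ge_min le_max => hl hr; apply: near_u.
  move: uu'1; rewrite /ball_ /= !ltr_norml => /andP[? ?].
  by case/orP: hl => ?; case/orP: hr => ?; apply/andP; split; lra.
have gu_c : g u <= g c by apply: gc; rewrite lexx ub.
have gu'_c' : g u' <= g c' by apply: gc'; rewrite lexx u'b.
have le_c' : g c' <= g c + e / 2.
  have [uc'|c'u] := leP u c'.
    by apply: (le_trans (gc c' _)); rewrite ?uc' ?c'b // lerDl ltW.
  have : `|g u - g c'| < e / 2.
    by apply: near_between; rewrite ge_min le_max u'c' (ltW c'u) orbT.
  by rewrite ltr_norml => /andP[? ?]; lra.
have lt_c : g c < g c' + e.
  have [u'c|cu'] := leP u' c.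
    by apply: (le_lt_trans (gc' c _)); rewrite ?u'c ?cb // ltrDl.
  have : `|g u - g c| < e / 2 by apply: near_between; rewrite ge_min le_max uc (ltW cu') orbT.
  have : `|g u - g u'| < e / 2 by apply: near_between; rewrite ge_min le_max lexx !orbT.
  by rewrite !ltr_norml => /andP[? ?] /andP[? ?]; lra.
by rewrite Fu Fu' ltr_norml; apply/andP; split; lra.
Qed.

End TailMax.

Section Blowup.
Context {R : realType} {V : normedModType R[i]} {T : V -> V}.
Hypothesis Hsp : forall z : R[i], `|z| = 1 -> (spectrum T z <-> z = 1).
Hypothesis Hblow : Num.max (`|th| * opnorm (resolvent T (expi th)))
    (`|th| * opnorm (resolvent T (expi (- th)))) @[th --> 0^'] --> +oo.

Lemma resnorm_sym_blowup A : exists2 d : R, 0 < d &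
  forall th, 0 < th < d -> A < th * resnorm_sym T th.
Proof.
have := (cvgryPgt _).1 Hblow A; rewrite near_withinE => H.
have [d /= d0 hd] := (nbhs_normP _ _).1 (H _).
exists d => // th /andP[t0 td].
have bt : ball_ Num.Def.normr 0 d th by rewrite /ball_ /= sub0r normrN gtr0_norm.
have := hd th bt (lt0r_neq0 t0); rewrite gtr0_norm // => /lt_le_trans; apply.
by rewrite /resnorm_sym /resnorm maxr_pMr // ltW.
Qed.

Lemma mres_surj s : mres T pi <= s -> exists2 th, 0 < th <= pi & mres T th = s.
Proof.
move=> hs; have pi0 : 0 < pi :> R := pi_gt0 R.
have [d d0 hd] := resnorm_sym_blowup ((`|s| + 1) * pi).
set t0 := Num.min (d / 2) pi.
have t00 : 0 < t0 by rewrite lt_min pi0 divr_gt0.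
have t0p : t0 <= pi by rewrite ge_min lexx orbT.
have t0d : t0 < d by rewrite gt_min; apply/orP; left; lra.
have s_t0 : s <= mres T t0.
  have := hd t0 (introT andP (conj t00 t0d)).
  have := resnorm_sym_le_mres Hsp _ (introT andP (conj t00 t0p)).
  by have := normr_ge0 s; have := ler_norm s; nra.
set mm := fun t => mres T (Num.min t pi).
have wc : {within `[t0, pi], continuous mm}.
  apply: continuous_in_subspaceT => x; rewrite inE /= in_itv /= => /andP[tx _].
  rewrite /mm; apply: (continuous_tail_max (resnorm_sym T) (mres T) pi0 _ _ _ (lt_le_trans t00 tx)).
    by move=> u /andP[u0 up]; apply: continuous_resnorm_sym; rewrite // gtr0_norm ?u0.
  exact: resnorm_sym_argmax Hsp.
have s_mid : Num.min (mm t0) (mm pi) <= s <= Num.max (mm t0) (mm pi).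
  by rewrite /mm (min_idPl t0p) minxx ge_min le_max hs s_t0 orbT.
have [th] := IVT t0p wc s_mid.
rewrite in_itv /= => /andP[t0th thp]; rewrite /mm (min_idPl thp) => <-.
by exists th; rewrite ?thp ?(lt_le_trans t00 t0th).
Qed.

End Blowup.

Lemma power_bounded_nrm_iter {R : realType} {V : normedModType R[i]} {T : V -> V} :
  bounded_op T -> power_bounded T ->
  exists2 M : R, 1 <= M & forall k x, nrm (iter k T x) <= M * nrm x.
Proof.
move=> [lT [B hB]] [M0 hM0]; exists (Num.max M0 1); first by rewrite le_max lexx orbT.
have bT : forall y, nrm (T y) <= Num.max B 0 * nrm y.
  move=> y; apply: (le_trans (hB y)); apply: ler_wpM2r; first exact: nrm_ge0.
  by rewrite le_max lexx.
have b_iter k : op_bounded (iter k T).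
  exists (Num.max B 0 ^+ k); elim: k => [|k IH] x /=; first by rewrite expr0 mul1r.
  apply: (le_trans (bT _)); rewrite exprS -mulrA; apply: ler_wpM2l => //.
  by rewrite le_max lexx orbT.
move=> k x; apply: (le_trans (nrm_le_opnorm _ x (linear_iter lT k) (b_iter k))).
apply: ler_wpM2r; first exact: nrm_ge0.
by apply: (le_trans (hM0 k)); rewrite le_max lexx.
Qed.

Section LowerBound.
Context {R : realType} {V : normedModType R[i]} {T : V -> V} (lT : linear T).
Context {M : R} (M1 : 1 <= M) (MT : forall k x, nrm (iter k T x) <= M * nrm x).
Hypothesis Hsp : forall z : R[i], `|z| = 1 -> (spectrum T z <-> z = 1).

Lemma linear_iterB n : linear (fun x => iter n T (x - T x)).
Proof.
move=> a u v /=; rewrite (lT a u v) -(linear_iter lT n); congr (iter n T _).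
by rewrite scalerBr opprD addrACA.
Qed.

Lemma op_bounded_iterB n : op_bounded (fun x => iter n T (x - T x)).
Proof.
exists (M * (1 + M)) => x; apply: (le_trans (MT _ _)); rewrite -mulrA.
apply: ler_wpM2l; first exact: le_trans ler01 M1.
apply: (le_trans (ler_nrmD _ _)); rewrite nrmN mulrDl mul1r lerD2l.
exact: (MT 1).
Qed.

Lemma mres_le_chord n e t : 0 < t <= pi ->
  (forall x, nrm (iter n T (x - T x)) <= e * nrm x) -> 2 * e < cabs (1 - expi t) ->
  mres T t <= 2 * M * (n%:R + (cabs (1 - expi t))^-1).
Proof.
move=> tpi he de; have [c [/andP[tc cp] _ ->]] := resnorm_sym_argmax Hsp _ tpi.
have [t0 tp] : 0 < t /\ t <= pi by apply/andP.
have d0 : 0 < cabs (1 - expi t) by apply: cabs_1Bexpi_gt0; rewrite gtr0_norm ?t0.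
have M0 : 0 <= M by apply: le_trans ler01 M1.
have bound w : `|w| = c -> resnorm T w <= 2 * M * (n%:R + (cabs (1 - expi t))^-1).
  move=> wc; have dw : cabs (1 - expi t) <= cabs (1 - expi w).
    by apply: cabs_1Bexpi_le; rewrite ?wc // ltW.
  have dw0 : 0 < cabs (1 - expi w) := lt_le_trans d0 dw.
  have n1w : expi w != 1 by apply: expi_neq1; rewrite wc cp (lt_le_trans t0 tc).
  have hS := is_resolvent_resolvent Hsp (cabs_expi w) n1w.
  apply: (@le_trans _ _ (2 * M * (n%:R + (cabs (1 - expi w))^-1))).
    apply: opnorm_le => [|x]; first by rewrite mulr_ge0 ?mulr_ge0 ?addr_ge0 // invr_ge0 ltW.
    by apply: (resolvent_bound lT MT _ _ _ _ x hS (cabs_expi w) dw0 _ he); lra.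
  by rewrite ler_wpM2l ?mulr_ge0 // lerD2l lef_pV2.
by rewrite ge_max !bound // ?normrN gtr0_norm // (lt_le_trans t0 tc).
Qed.

Hypothesis Hblow : Num.max (`|th| * opnorm (resolvent T (expi th)))
    (`|th| * opnorm (resolvent T (expi (- th)))) @[th --> 0^'] --> +oo.

Lemma chord_le_opnorm_iterB : exists2 N : R, 0 <= N & forall n t, N < n%:R ->
  0 < t <= pi -> mres T t = (4 * M + 1) * n%:R ->
  cabs (1 - expi t) <= 2 * opnorm (fun x => iter n T (x - T x)).
Proof.
have pi0 : 0 < pi :> R := pi_gt0 R.
have M0 : 0 < M by apply: lt_le_trans ltr01 M1.
have [db db0 hdb] := resnorm_sym_blowup Hblow (4 * M * pi).
exists (2 * M * pi / db); first by rewrite !mulr_ge0 ?invr_ge0 // ltW.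
move=> n t nN tpi mt; have [t0 tp] : 0 < t /\ t <= pi by apply/andP.
have he x := nrm_le_opnorm _ x (linear_iterB n) (op_bounded_iterB n).
rewrite leNgt; apply/negP => /(mres_le_chord _ _ _ tpi he); rewrite mt.
set s := (4 * M + 1) * n%:R; set d := cabs (1 - expi t).
have dlow : t / pi <= d by apply: cabs_1Bexpi_ge; rewrite tp ltW.
have d0 : 0 < d by apply: lt_le_trans dlow; rewrite divr_gt0.
have n0 : 0 < n%:R :> R by apply: le_lt_trans nN; rewrite !mulr_ge0 ?invr_ge0 // ltW.
have Mn : 0 <= M * n%:R by rewrite mulr_ge0 // ltW.
set D := d^-1; rewrite mulrDr => sle.
have sE : s = 4 * (M * n%:R) + n%:R by rewrite /s; ring.
have [tdb|dbt] := ltP t db.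
  have h1 : 4 * M * pi < t * s.
    apply: lt_le_trans (hdb t (introT andP (conj t0 tdb))) _.
    by rewrite ler_pM2l // /s -mt resnorm_sym_le_mres.
  have h2 : 4 * M < d * s.
    rewrite -(ltr_pM2r pi0); apply: lt_le_trans h1 _.
    rewrite mulrAC; apply: ler_wpM2r; first by rewrite sE; lra.
    by rewrite -ler_pdivrMr.
  have h3 : 4 * M * D < s.
    by rewrite -(mulKf (lt0r_neq0 d0) s) mulrC ltr_pM2l ?invr_gt0.
  lra.
have hD : D <= pi / db.
  rewrite /D -(invf_div db pi) lef_pV2 ?posrE ?divr_gt0 //.
  by apply: le_trans dlow; rewrite ler_pM2r ?invr_gt0.
have : 2 * M * D <= 2 * M * (pi / db).
  by apply: ler_wpM2l => //; rewrite mulr_ge0 // ltW.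
lra.
Qed.

End LowerBound.

Theorem corollary2p6 (R : realType) (X : completeNormedModType R[i])
  (T : X -> X) (minv : R -> R) :
  bounded_op T ->
  power_bounded T ->
  (forall z : R[i], `|z| = 1 -> (spectrum T z <-> z = 1)) ->
  (Num.max (`|th| * opnorm (resolvent T (expi th)))
           (`|th| * opnorm (resolvent T (expi (- th))))
     @[th --> 0^'] --> +oo) ->
  (forall s : R, (exists2 th : R, 0 < th <= pi & mres T th = s) ->
     0 < minv s <= pi /\ mres T (minv s) = s) ->
  exists c C : R, 0 < c /\ 0 < C /\
    \forall n \near \oo,
      c * minv (C * n%:R) <= opnorm (fun x => iter n T (x - T x)).
Proof.
move=> bT pbT Hsp Hblow Hminv.
have [M M1 MT] := power_bounded_nrm_iter bT pbT.
have [N N0 hN] := chord_le_opnorm_iterB bT.1 M1 MT Hsp Hblow.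
have pi0 : 0 < pi :> R := pi_gt0 R.
set C := 4 * M + 1; have C0 : 0 < C by rewrite /C; lra.
exists (1 / (2 * pi)), C; split; first by rewrite divr_gt0 // mulr_gt0.
split => //; set Q := Num.max N (`|mres T pi| / C).
have Q0 : 0 <= Q by rewrite le_max N0.
exists (Num.bound Q) => // n /= hn.
have nQ : Q < n%:R by apply: lt_le_trans (archi_boundP Q0) _; rewrite ler_nat.
move: nQ; rewrite gt_max => /andP[nN /ltW].
rewrite ler_pdivrMr // mulrC => /(le_trans (ler_norm _)) /(mres_surj Hsp Hblow).
move=> [th thpi mth]; have [tpi mt] := Hminv _ (ex_intro2 _ _ th thpi mth).
have := hN n _ nN tpi mt; set t := minv _ in tpi *.
have := cabs_1Bexpi_ge t; case/andP: tpi => t0 tp; rewrite ltW // tp => /(_ isT).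
rewrite (_ : 1 / (2 * pi) * t = t / pi / 2); last by rewrite mul1r invfM [_ * t]mulrC mulrA mulrAC.
lra.
Qed.
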